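(* Let $P\subset\mathbb R^d$ be a $d$-polytope, $d\geq 3$, $S$ a simplex facet of $P$ in bounded position, and $\mathcal F,\mathcal N\subseteq\operatorname{adj}(S)$ disjoint with $\mathcal F$ nonsimple. Assume every vertex of $P$ lies in at least one facet of $P$ not in $\mathcal F\cup\mathcal N\cup\{S\}$. Then for $v\in V_S(\mathcal F,\mathcal N;P)$, the polytope $Q=\operatorname{conv}(P\cup\{v\})$ satisfies $f_0(Q)=f_0(P)+1$.
   Context: $f_0$ denotes the number of vertices. For a facet $F$ of $P$ let $H_F=\{x:\langle x,a_F\rangle=\ell_F\}$ be its affine hull, oriented so that $P\subseteq\{x:\langle x,a_F\rangle\geq\ell_F\}$; $H_F^+$, $H_F^-$ are the open sides $\{>\}$, $\{<\}$. Two facets are adjacent if they share a ridge; $\operatorname{adj}(S)$ is the set of facets adjacent to $S$. A simplex facet is a facet combinatorially equivalent to a $(d-1)$-simplex. $S$ is in bounded position if for every set of $d$ facets in $\operatorname{adj}(S)$ their hyperplanes meet in a point of $H_S^-$. $\mathcal F\subseteq\operatorname{adj}(S)$ is nonsimple if there is no pair of adjacent facets $G,G'\in\mathcal F$ having a common $(d-3)$-face with $S$. $V_S(\mathcal F,\mathcal N;P)$ is the set of points lying in $H_F^-$ for $F\in\mathcal N\cup\{S\}$, in $H_F$ for $F\in\mathcal F$, and in $H_F^+$ for all other facets $F$ of $P$. *)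

(* Points of R^d are row vectors 'rV[R]_d over a real field R;
   subsets of R^d are predicates 'rV[R]_d -> Prop. *)
From mathcomp Require Import all_boot all_order all_algebra.
Set Implicit Arguments. Unset Strict Implicit. Unset Printing Implicit Defensive.
Import Order.TTheory GRing.Theory Num.Theory.
Local Open Scope ring_scope.

Section Polytopes.
Variables (R : realFieldType) (d : nat).
Notation pt := 'rV[R]_d.

Definition dot (x y : pt) : R := \sum_(i < d) x 0 i * y 0 i.

Definition conv (V : seq pt) : pt -> Prop := fun x =>
  exists w : 'I_(size V) -> R, (forall i, 0 <= w i) /\ \sum_i w i = 1 /\
    x = \sum_i w i *: V`_i.

Definition aff_indep n (p : 'I_n -> pt) : Prop :=
  forall c : 'I_n -> R, \sum_i c i = 0 -> \sum_i c i *: p i = 0 ->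
    forall i, c i = 0.

Definition dim_eq (A : pt -> Prop) (k : nat) : Prop :=
  (exists p : 'I_k.+1 -> pt, (forall i, A (p i)) /\ aff_indep p) /\
  ~ (exists p : 'I_k.+2 -> pt, (forall i, A (p i)) /\ aff_indep p).

Definition supports (P : pt -> Prop) (a : pt) (l : R) : Prop :=
  forall y, P y -> l <= dot y a.

(* faces of P (including the empty face and P itself) *)
Definition face (P A : pt -> Prop) : Prop :=
  exists a l, supports P a l /\ (forall y, A y <-> P y /\ dot y a = l).

Definition vertex (P : pt -> Prop) (x : pt) : Prop :=
  exists A, face P A /\ dim_eq A 0 /\ A x.

Definition has_f0 (P : pt -> Prop) (n : nat) : Prop :=
  exists s : seq pt, uniq s /\ size s = n /\ (forall x, vertex P x <-> x \in s).

Definition facet (P F : pt -> Prop) : Prop := face P F /\ dim_eq F d.-1.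

Definition ridge (P A : pt -> Prop) : Prop := face P A /\ dim_eq A d.-2.

(* relative position of x w.r.t. the oriented affine hull H_F of a facet F,
   i.e. H_F = {<x,a> = l} with P in {<x,a> >= l} *)
Definition hyp_pos (P F : pt -> Prop) (rel : R -> R -> bool) (x : pt) : Prop :=
  exists a l, a != 0 /\ supports P a l /\ (forall y, F y <-> P y /\ dot y a = l) /\
    rel (dot x a) l.

Definition in_H P F x := hyp_pos P F (fun u l => u == l) x.
Definition in_Hplus P F x := hyp_pos P F (fun u l => l < u) x.
Definition in_Hminus P F x := hyp_pos P F (fun u l => u < l) x.

Definition adjacent (P F G : pt -> Prop) : Prop :=
  facet P F /\ facet P G /\ F <> G /\
  exists A, ridge P A /\ (forall x, A x -> F x /\ G x).

(* S is a simplex facet: a facet combinatorially a (d-1)-simplex,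
   i.e. a (d-1)-polytope with exactly d vertices *)
Definition simplex_facet (P S : pt -> Prop) : Prop := facet P S /\ has_f0 S d.

Definition bounded_position (P S : pt -> Prop) : Prop :=
  forall g : 'I_d -> (pt -> Prop),
    (forall i j, g i = g j -> i = j) -> (forall i, adjacent P S (g i)) ->
    exists x, (forall i, in_H P (g i) x) /\
      (forall y, (forall i, in_H P (g i) y) -> y = x) /\ in_Hminus P S x.

Definition nonsimple (P S : pt -> Prop) (Fam : (pt -> Prop) -> Prop) : Prop :=
  ~ exists G G', Fam G /\ Fam G' /\ adjacent P G G' /\
      exists A, face P A /\ dim_eq A (d - 3) /\
        (forall x, A x -> G x /\ G' x /\ S x).

Definition V_S (P S : pt -> Prop) (Fam Nam : (pt -> Prop) -> Prop) (x : pt) : Prop :=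
  in_Hminus P S x /\
  (forall F, Nam F -> in_Hminus P F x) /\
  (forall F, Fam F -> in_H P F x) /\
  (forall F, facet P F -> ~ Fam F -> ~ Nam F -> F <> S -> in_Hplus P F x).

End Polytopes.

From mathcomp Require Import all_boot all_order all_algebra.
From mathcomp Require Import ring lra.
From Stdlib Require Import Classical ClassicalEpsilon.
Set Implicit Arguments. Unset Strict Implicit. Unset Printing Implicit Defensive.
Import Order.TTheory GRing.Theory Num.Theory.
Local Open Scope ring_scope.

(* The point v lies beyond the facet S, so the hyperplane of S, pushed through
   v, exposes v in Q = conv(P u {v}); and every vertex of Q other than v is a
   vertex of P.  Conversely a vertex x of P lies on a facet F with v strictly
   beneath H_F; tilting a hyperplane exposing x in P towards H_F keeps v
   strictly on the side of P, so the tilted hyperplane still exposes x in Q.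
   Hence the vertices of Q are those of P together with v. *)

Section ConvexHullVertices.
Variables (R : realFieldType) (d : nat).
Notation pt := 'rV[R]_d.
Implicit Types (V : seq pt) (x y v p a c : pt) (P : pt -> Prop).

Lemma dotDl x y a : dot (x + y) a = dot x a + dot y a.
Proof. by rewrite /dot -big_split; apply: eq_bigr => i _; rewrite mxE mulrDl. Qed.

Lemma dotZl r x a : dot (r *: x) a = r * dot x a.
Proof. by rewrite /dot mulr_sumr; apply: eq_bigr => i _; rewrite mxE mulrA. Qed.

Lemma dot0l a : dot 0 a = 0.
Proof. by rewrite /dot big1 // => i _; rewrite mxE mul0r. Qed.

Lemma dotDr x a c : dot x (a + c) = dot x a + dot x c.
Proof. by rewrite /dot -big_split; apply: eq_bigr => i _; rewrite mxE mulrDr. Qed.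

Lemma dotZr r x a : dot x (r *: a) = r * dot x a.
Proof. by rewrite /dot mulr_sumr; apply: eq_bigr => i _; rewrite mxE mulrCA. Qed.

Lemma dot_suml n (w : 'I_n -> R) (F : 'I_n -> pt) a :
  dot (\sum_i w i *: F i) a = \sum_i w i * dot (F i) a.
Proof.
rewrite (big_morph (fun x : pt => dot x a) (fun x y : pt => dotDl x y a) (dot0l a)).
by apply: eq_bigr => i _; rewrite dotZl.
Qed.

Lemma ler_mix (s u w k : R) :
  0 <= s < 1 -> k <= u -> k <= w -> k <= s * u + (1 - s) * w.
Proof. by move=> /andP[s0 s1] ku kw; nra. Qed.

Lemma mix_eq_lb (s u w k : R) : 0 <= s < 1 -> k <= u -> k <= w ->
  s * u + (1 - s) * w = k -> w = k /\ (s = 0 \/ u = k).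
Proof.
move=> /andP[s0 s1] ku kw e.
have su : 0 <= s * (u - k) by apply: mulr_ge0; lra.
have sw : 0 <= (1 - s) * (w - k) by apply: mulr_ge0; lra.
have sum0 : s * (u - k) + (1 - s) * (w - k) = 0 by rewrite -e; ring.
have /eqP : (1 - s) * (w - k) = 0 by lra.
have /eqP : s * (u - k) = 0 by lra.
rewrite !mulf_eq0 => /orP[/eqP|/eqP] hu /orP[/eqP|/eqP] hw; lra.
Qed.

Lemma exists_tilt (k l u w : R) : l < w -> exists2 t, 0 < t & k + t * l < u + t * w.
Proof.
move=> lw; have wl : 0 < w - l by rewrite subr_gt0.
exists ((`|k - u| + 1) / (w - l)); first by rewrite divr_gt0 // ltr_wpDl.
have := ler_norm (k - u); have : (`|k - u| + 1) / (w - l) * (w - l) = `|k - u| + 1.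
  by rewrite divfK // gt_eqF.
nra.
Qed.

Lemma aff_indep2 (p : 'I_2 -> pt) : aff_indep p <-> p ord0 <> p ord_max.
Proof.
have lift0E : lift ord0 ord0 = ord_max :> 'I_2 by apply: val_inj.
split=> [ind e | ne c].
  have := ind (fun i => if i == ord0 then 1 else -1).
  rewrite !big_ord_recl !big_ord0 /= lift0E e scaleN1r scale1r !addr0 !subrr.
  by move=> /(_ (erefl _) (erefl _) ord0) /eqP; rewrite oner_eq0.
rewrite !big_ord_recl !big_ord0 !addr0 lift0E => /eqP; rewrite addr_eq0 => /eqP c1.
rewrite c1 scaleNr addrC -scalerBr => /eqP; rewrite scaler_eq0 subr_eq0.
case/orP=> [/eqP c0 i | /eqP /esym //].
have [-> | i0] := eqVneq i ord0; first by rewrite c1 c0 oppr0.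
by rewrite (_ : i = ord_max) //; apply/val_inj; move: i0; case: i => [[|[|]]].
Qed.

Lemma dim_eq0P (A : pt -> Prop) :
  dim_eq A 0 <-> (exists x, A x) /\ (forall x y, A x -> A y -> x = y).
Proof.
split=> [[[p [Ap _]] no2] | [[x Ax] uq]].
  split; first by exists (p ord0).
  move=> x y Ax Ay; apply: NNPP => nxy; apply: no2.
  exists (fun i : 'I_2 => if i == ord0 then x else y).
  by split; [move=> i; case: ifP | exact/aff_indep2].
split; first by exists (fun _ => x); split=> // c; rewrite big_ord1 => c0 _ i; rewrite ord1.
by move=> [p [Ap /aff_indep2]]; apply; apply: uq.
Qed.

Definition exposed P x := exists c k, supports P c k /\ P x /\ dot x c = k /\
  (forall y, P y -> dot y c = k -> y = x).

Lemma vertexE P x : vertex P x <-> exposed P x.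
Proof.
split=> [[A [[c [k [sup HA]]] [/dim_eq0P[_ uq] Ax]]] | [c [k [sup [Px [xc uq]]]]]].
  have [Px xc] := (HA x).1 Ax.
  by exists c, k; do 3!split=> //; move=> y Py yc; apply: uq => //; apply/HA.
exists (fun y => P y /\ dot y c = k); split; first by exists c, k.
split=> //; apply/dim_eq0P; split; first by exists x.
by move=> y z [Py yc] [Pz zc]; rewrite (uq y Py yc) (uq z Pz zc).
Qed.

Lemma conv_nth V (i : 'I_(size V)) : conv V V`_i.
Proof.
exists (fun j => if j == i then 1 else 0); split; first by move=> j; case: ifP.
split; first by rewrite (bigD1 i) //= eqxx big1 ?addr0 // => j /negbTE ->.
rewrite (bigD1 i) //= eqxx scale1r big1 ?addr0 // => j /negbTE ->.
by rewrite scale0r.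
Qed.

Lemma exposed_conv_mem V x : exposed (conv V) x -> x \in V.
Proof.
move=> [c [k [sup [[w [w0 [w1 ex]]] [xc uq]]]]].
have slack0 : \sum_i w i * (dot V`_i c - k) = 0.
  under eq_bigr do rewrite mulrBr.
  by rewrite sumrB -mulr_suml w1 mul1r -dot_suml -ex xc subrr.
have slack_ge0 i : 0 <= w i * (dot V`_i c - k).
  by rewrite mulr_ge0 // subr_ge0; apply/sup/conv_nth.
have [i wi] : exists i, 0 < w i.
  apply: NNPP => /(_ _) nopos; move: w1; rewrite big1 => [/eqP|i _].
    by rewrite eq_sym oner_eq0.
  by apply/eqP; rewrite eq_le w0 andbT leNgt; apply/negP => wi; apply: nopos; exists i.
have /eqP := @psumr_eq0P _ _ _ _ (fun i _ => slack_ge0 i) slack0 i isT.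
rewrite mulf_eq0 gt_eqF //= subr_eq0 => /eqP ic.
by rewrite -(uq V`_i (conv_nth i) ic) mem_nth.
Qed.

Lemma conv_cons v V y : conv V y -> conv (v :: V) y.
Proof.
move=> [w [w0 [w1 ->]]].
exists (fun j : 'I_(size V).+1 => if unlift ord0 j is Some i then w i else 0).
split; first by move=> j; case: (unlift ord0 j).
rewrite !big_ord_recl unlift_none scale0r !add0r; split.
  by rewrite -w1; apply: eq_bigr => i _; rewrite liftK.
by apply: eq_bigr => i _; rewrite liftK lift0.
Qed.

Lemma conv_head v V : conv (v :: V) v.
Proof. exact: (@conv_nth (v :: V) ord0). Qed.

Lemma conv_consP v V y : conv (v :: V) y -> y = v \/
  exists s p, 0 <= s < 1 /\ conv V p /\ y = s *: v + (1 - s) *: p.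
Proof.
move=> [w [w0 [w1 ->]]]; rewrite big_ord_recl in w1; rewrite big_ord_recl.
under eq_bigr => i _ do rewrite lift0.
set r := \sum_(i < size V) w (lift ord0 i) in w1 *.
have [r0 | r_neq0] := eqVneq r 0.
  have wV0 i : w (lift ord0 i) = 0 by apply: (psumr_eq0P _ r0).
  left; rewrite big1 => [|i _]; last by rewrite wV0 scale0r.
  by rewrite (_ : w ord0 = 1) ?scale1r ?addr0 // -w1 r0 addr0.
have r_gt0 : 0 < r by rewrite lt0r r_neq0 sumr_ge0.
have r_def : 1 - w ord0 = r by rewrite -w1 addrC addKr.
right; exists (w ord0), (\sum_i (w (lift ord0 i) / r) *: V`_i); split.
  by rewrite w0 /=; lra.
split.
  exists (fun i => w (lift ord0 i) / r); split.
    by move=> i; apply: divr_ge0 (w0 _) (ltW r_gt0).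
  by rewrite -mulr_suml divff.
rewrite r_def scaler_sumr; congr (_ + _); apply: eq_bigr => i _.
by rewrite scalerA mulrC divfK.
Qed.

Lemma dot_mix s v p c : dot (s *: v + (1 - s) *: p) c = s * dot v c + (1 - s) * dot p c.
Proof. by rewrite dotDl !dotZl. Qed.

Lemma supports_conv_cons v V c k :
  supports (conv V) c k -> k <= dot v c -> supports (conv (v :: V)) c k.
Proof.
move=> sup kv y /conv_consP[-> // | [s [p [s01 [Pp ->]]]]].
by rewrite dot_mix ler_mix // sup.
Qed.

Lemma exposed_conv_cons_inv v V x :
  exposed (conv (v :: V)) x -> x = v \/ exposed (conv V) x.
Proof.
move=> [c [k [sup [Qx [xc uq]]]]].
case: (conv_consP Qx) => [-> | [s [p [s01 [Pp xE]]]]]; [by left | right].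
have kv := sup v (conv_head v V).
have kp := sup p (conv_cons v Pp).
have [pc _] : dot p c = k /\ (s = 0 \/ dot v c = k).
  by apply: mix_eq_lb => //; rewrite -dot_mix -xE.
have px : p = x := uq p (conv_cons v Pp) pc.
exists c, k; split; first by move=> y Py; apply: sup; apply: conv_cons.
rewrite -px; do 2!split=> //.
by move=> y Py yc; rewrite px; apply: uq (conv_cons v Py) yc.
Qed.

Lemma exposed_conv_cons_head v V a l :
  supports (conv V) a l -> dot v a < l -> exposed (conv (v :: V)) v.
Proof.
move=> sup va; exists a, (dot v a); split.
  by apply: supports_conv_cons => // y /sup; lra.
split; first exact: conv_head.
split=> // y /conv_consP[// | [s [p [s01 [Pp ->]]]]].
have vp : dot v a < dot p a by have := sup p Pp; lra.
by rewrite dot_mix => /(mix_eq_lb s01 (lexx _) (ltW vp)) [pa _]; rewrite pa ltxx in vp.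
Qed.

Lemma exposed_conv_cons_keep v V x a l : exposed (conv V) x ->
  supports (conv V) a l -> dot x a = l -> l < dot v a -> exposed (conv (v :: V)) x.
Proof.
move=> [c [k [supc [Px [xc uq]]]]] supa xa la.
have [t t_gt0 vt] := @exists_tilt k l (dot v c) (dot v a) la.
have supt : supports (conv V) (c + t *: a) (k + t * l).
  by move=> y Py; rewrite dotDr dotZr; have := supc y Py; have := supa y Py; nra.
have vt' : k + t * l < dot v (c + t *: a) by rewrite dotDr dotZr.
exists (c + t *: a), (k + t * l); split; first exact/supports_conv_cons/ltW.
split; first exact: conv_cons.
split; first by rewrite dotDr dotZr xc xa.
move=> y /conv_consP[-> | [s [p [s01 [Pp ->]]]]]; first by move=> e; rewrite e ltxx in vt'.
rewrite dot_mix => /(mix_eq_lb s01 (ltW vt') (supt p Pp)) [pt [s0 | e]]; last first.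
  by rewrite e ltxx in vt'.
rewrite s0 scale0r add0r subr0 scale1r; apply: uq => //.
by move: pt; rewrite dotDr dotZr; have := supc p Pp; have := supa p Pp; nra.
Qed.

Lemma uniq_enum_sub (Pr : pt -> Prop) (s : seq pt) : (forall x, Pr x -> x \in s) ->
  exists t, uniq t /\ forall x, Pr x <-> x \in t.
Proof.
move=> sub; exists [seq x <- undup s | excluded_middle_informative (Pr x)].
split=> [|x]; first by rewrite filter_uniq ?undup_uniq.
rewrite mem_filter mem_undup; case: excluded_middle_informative => /= Px.
  by split=> [/sub | _].
by split=> // /Px.
Qed.

Lemma has_f0_conv V : exists n, has_f0 (conv V) n.
Proof.
have [t [t_uniq tE]] : exists t, uniq t /\ forall x, vertex (conv V) x <-> x \in t.
  by apply: (uniq_enum_sub (s := V)) => x /vertexE /exposed_conv_mem.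
by exists (size t), t.
Qed.

Lemma has_f0_cons P Q v n : has_f0 P n -> ~ vertex P v ->
  (forall x, vertex Q x <-> x = v \/ vertex P x) -> has_f0 Q n.+1.
Proof.
move=> [t [t_uniq [<- tE]]] nPv QE; exists (v :: t); split.
  by rewrite /= t_uniq andbT; apply/negP => /tE.
split=> // x; rewrite QE in_cons tE.
by split=> [[-> | ->] | /orP[/eqP | ]]; rewrite ?eqxx ?orbT; auto.
Qed.

Lemma has_f0_conv_cons V v a l :
  supports (conv V) a l -> dot v a < l ->
  (forall x, vertex (conv V) x ->
     exists b m, supports (conv V) b m /\ dot x b = m /\ m < dot v b) ->
  exists n, has_f0 (conv V) n /\ has_f0 (conv (v :: V)) n.+1.
Proof.
move=> supS vS beneath; have [n fP] := has_f0_conv V.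
exists n; split=> //; apply: (has_f0_cons fP).
  by move=> /vertexE[c [k [_ [/supS Pv _]]]]; lra.
move=> x; rewrite !vertexE; split=> [/exposed_conv_cons_inv // | [-> | xP]].
  exact: exposed_conv_cons_head vS.
have [b [m [supF [xF vF]]]] := beneath x ((vertexE _ _).2 xP).
exact: exposed_conv_cons_keep xP supF xF vF.
Qed.

End ConvexHullVertices.

Theorem corollary2p12 (R : realFieldType) (d : nat) (V : seq 'rV[R]_d)
    (S : 'rV[R]_d -> Prop) (Fam Nam : ('rV[R]_d -> Prop) -> Prop) (v : 'rV[R]_d) :
  (3 <= d)%N ->
  dim_eq (conv V) d ->
  simplex_facet (conv V) S ->
  bounded_position (conv V) S ->
  (forall G, Fam G -> adjacent (conv V) S G) ->
  (forall G, Nam G -> adjacent (conv V) S G) ->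
  (forall G, Fam G -> ~ Nam G) ->
  nonsimple (conv V) S Fam ->
  (forall x, vertex (conv V) x ->
     exists F, facet (conv V) F /\ F x /\ ~ Fam F /\ ~ Nam F /\ F <> S) ->
  V_S (conv V) S Fam Nam v ->
  exists n, has_f0 (conv V) n /\ has_f0 (conv (v :: V)) n.+1.
Proof.
(* Once every vertex of P lies on a facet having v beneath it, the combinatorial
   hypotheses on S, Fam and Nam are no longer needed. *)
move=> _ _ _ _ _ _ _ _ on_free_facet [[aS [lS [_ [supS [_ vS]]]]] [_ [_ beneath]]].
apply: (has_f0_conv_cons supS vS) => x /on_free_facet[F [facetF [Fx [nFam [nNam nS]]]]].
have [a [l [_ [supF [FE vF]]]]] := beneath F facetF nFam nNam nS.
by exists a, l; split=> //; split=> //; case: ((FE x).1 Fx).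
Qed.
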